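(* Let $d$ be a positive integer and let $z_j\in\mathbb{C}$ be given for each $j\in[d]$ relatively prime to $d$. Suppose that for every $m\le 6$ and every $m$-tuple $(j_1,\dots,j_m)$ of elements of $[d]$ relatively prime to $d$ satisfying $j_1+\cdots+j_m\equiv 0\pmod d$, we have $z_{j_1}+\cdots+z_{j_m}\in\mathbb{Z}$. Then there exists an integer $c$ such that $z_j-\frac{cj}{d}\in\mathbb{Z}$ for all $j\in[d]$ relatively prime to $d$.
   Context: $[d]=\{1,\dots,d\}$; tuples may contain repeated entries, and $m\ge1$. *)

From HB Require Import structures.
From mathcomp Require Import all_boot all_order all_algebra.
From mathcomp Require Import complex.
From mathcomp Require Import reals.
Set Implicit Arguments. Unset Strict Implicit. Unset Printing Implicit Defensive.
Import Order.TTheory GRing.Theory Num.Theory.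
Local Open Scope ring_scope.

Definition is_intC (F : pzRingType) (z : F) : Prop := exists k : int, z = k%:~R.

Definition unit_index (d j : nat) : bool := [&& (0 < j)%N, (j <= d)%N & coprime j d].

From HB Require Import structures.
From mathcomp Require Import all_boot all_order all_algebra.
From mathcomp Require Import complex.
From mathcomp Require Import reals.
From mathcomp Require Import zify ring.

(* Put u' := d - u.  The case m = 2 of the hypothesis makes z_u + z_u' an
   integer, so whenever two short lists P, N of units satisfy
   sum P = sum N (mod d), the difference sum_P z - sum_N z is an integer
   (trade each entry u of N for u' in P).  Every residue k with d odd or k even
   is a sum a + b of two units; comparing a + b with a0 + b0 + 1 + 1, where
   a0 + b0 = k - 2, shows by induction on k that z_a + z_b - k z_1 is an
   integer.  For k = d this makes c := d z_1 an integer, and for (a, b) = (j, 1)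
   it gives z_j - j z_1 = z_j - c j / d in Z. *)

Set Implicit Arguments.
Unset Strict Implicit.
Unset Printing Implicit Defensive.

Import Order.TTheory GRing.Theory Num.Theory.

Section CoprimeSums.
Local Open Scope nat_scope.

Lemma coprime_prime_ndvd x d :
  0 < d -> (forall p, prime p -> p %| d -> ~~ (p %| x)) -> coprime x d.
Proof.
move=> d_gt0 ndvd_x; apply: contraT => not_coprime.
have g_gt1 : 1 < gcdn x d.
  move: not_coprime; rewrite /coprime ltn_neqAle eq_sym.
  by rewrite gcdn_gt0 d_gt0 orbT => ->.
have := ndvd_x _ (pdiv_prime g_gt1) (dvdn_trans (pdiv_dvd _) (dvdn_gcdr _ _)).
by rewrite (dvdn_trans (pdiv_dvd _) (dvdn_gcdl _ _)).
Qed.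

Lemma prime_dvd_part pi p n :
  prime p -> 0 < n -> (p %| n`_pi) = (p %| n) && (p \in pi).
Proof.
move=> p_pr n_gt0; have := pi_of_part pi n_gt0 p.
by rewrite !inE !mem_primes p_pr part_gt0 n_gt0.
Qed.

Lemma prime_dvd_predn p d : 0 < d -> prime p -> p %| d -> ~~ (p %| d.-1).
Proof.
move=> d_gt0 p_pr p_d.
by rewrite -prime_coprime // coprime_sym (coprime_dvdr p_d) // coprimePn.
Qed.

(* The witnesses are congruent to m - n and 2n - m, where m is the part of d
   coprime to n: a prime factor p of d divides exactly one of m and n, and
   the parity condition rules out p = 2 when p does not divide n. *)
Lemma coprime_sum_mod d n : 0 < d -> odd d || ~~ odd n ->
  exists a b, [/\ coprime a d, coprime b d & a + b = n %[mod d]].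
Proof.
wlog n_gt0 : n / 0 < n => [base|] d_gt0 parity.
  have parity' : odd d || ~~ odd (n + d).
    by rewrite oddD; case: (odd d) parity; rewrite ?addbF ?addbT.
  have [a [b [a_d b_d ab_n]]] := base (n + d) (ltn_addl _ d_gt0) d_gt0 parity'.
  by exists a, b; rewrite modnDr in ab_n.
set m := d`_(\pi(n)^').
have p_m p : prime p -> p %| d -> (p %| m) = ~~ (p %| n).
  by move=> p_pr p_d; rewrite prime_dvd_part // p_d !inE mem_primes p_pr n_gt0.
exists (m + d.-1 * n), (n.*2 + d.-1 * m); split.
- apply: coprime_prime_ndvd => // p p_pr p_d.
  have := p_m p p_pr p_d; have := prime_dvd_predn d_gt0 p_pr p_d.
  case p_n: (p %| n) => p_d1 p_m'.
    by rewrite dvdn_addl ?p_m' // dvdn_mull.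
  by rewrite dvdn_addr ?p_m' // Euclid_dvdM // p_n (negbTE p_d1).
- apply: coprime_prime_ndvd => // p p_pr p_d.
  have := p_m p p_pr p_d; have := prime_dvd_predn d_gt0 p_pr p_d.
  case p_n: (p %| n) => p_d1 p_m'.
    rewrite dvdn_addr ?Euclid_dvdM ?p_m' ?(negbTE p_d1) //.
    by rewrite -muln2 dvdn_mulr.
  rewrite dvdn_addl ?dvdn_mull ?p_m' // -muln2 Euclid_dvdM // p_n /=.
  rewrite dvdn_prime2 //; apply: contraL parity => /eqP p2.
  by move: p_d p_n; rewrite p2 !dvdn2 => /negbTE-> ->.
- have -> : m + d.-1 * n + (n.*2 + d.-1 * m) = (m + n) * d + n.
    by clearbody m; rewrite -muln2; case: d d_gt0 {parity p_m} => // d _; nia.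
  by rewrite modnMDl.
Qed.

Lemma unit_index1 d : 0 < d -> unit_index d 1.
Proof. by move=> d_gt0; rewrite /unit_index d_gt0 coprime1n. Qed.

Lemma unit_index_mod d a : 1 < d -> coprime a d -> unit_index d (a %% d).
Proof.
move=> d_gt1 a_d; have a_lt_d : a %% d < d by rewrite ltn_mod; lia.
rewrite /unit_index coprime_modl a_d (ltnW a_lt_d) !andbT lt0n.
apply/eqP => a0; move: a_d.
by rewrite -coprime_modl a0 /coprime gcd0n; lia.
Qed.

Lemma unit_index_sum_mod d n : 1 < d -> odd d || ~~ odd n ->
  exists a b, [/\ unit_index d a, unit_index d b & a + b = n %[mod d]].
Proof.
move=> d_gt1 parity.
have [a [b [a_d b_d ab_n]]] := coprime_sum_mod (ltnW d_gt1) parity.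
by exists (a %% d), (b %% d); rewrite !unit_index_mod ?modnDm.
Qed.

Lemma unit_index_sub d u : 1 < d -> unit_index d u -> unit_index d (d - u).
Proof.
move=> d_gt1 /and3P[u_gt0 u_le_d u_d].
have u_lt_d : u < d.
  rewrite ltn_neqAle u_le_d andbT; apply: contraTneq u_d => ->.
  by rewrite /coprime gcdnn neq_ltn d_gt1 orbT.
move: u_d u_lt_d; rewrite -(subnK u_le_d); set e := d - u.
rewrite /unit_index addnK /coprime gcdnDl gcdnDr gcdnC => -> u_lt.
by rewrite leq_addr andbT; lia.
Qed.

End CoprimeSums.

Local Open Scope ring_scope.

Section IntegerElements.
Variable R : pzRingType.
Implicit Types x y : R.

Lemma is_intC0 : is_intC (0 : R).
Proof. by exists 0. Qed.

Lemma is_intCD x y : is_intC x -> is_intC y -> is_intC (x + y).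
Proof. by move=> [a ->] [b ->]; exists (a + b); rewrite intrD. Qed.

Lemma is_intCB x y : is_intC x -> is_intC y -> is_intC (x - y).
Proof. by move=> [a ->] [b ->]; exists (a - b); rewrite intrB. Qed.

End IntegerElements.

Section UnitIndexSums.
Variables (R : comPzRingType) (d : nat) (z : nat -> R).
Hypothesis d_gt1 : (1 < d)%N.
Hypothesis z_sum : forall s : seq nat,
  (1 <= size s <= 6)%N -> all (unit_index d) s -> (sumn s %% d = 0)%N ->
  is_intC (\sum_(j <- s) z j).

Lemma is_intC_add_compl u : unit_index d u -> is_intC (z u + z (d - u)%N).
Proof.
move=> u_unit; have u_le_d : (u <= d)%N by case/and3P: u_unit.
have := z_sum (s := [:: u; d - u]%N) isT.
rewrite /= u_unit unit_index_sub //= addn0 subnKC // modnn.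
by rewrite !big_cons big_nil addr0; apply.
Qed.

Lemma is_intC_sum_sub_congr (P N : seq nat) :
  all (unit_index d) P -> all (unit_index d) N ->
  (size P + size N <= 6)%N -> (sumn P = sumn N %[mod d])%N ->
  is_intC (\sum_(j <- P) z j - \sum_(j <- N) z j).
Proof.
elim: N P => [|u N IH] P P_unit N_unit PN_size PN_sum.
  rewrite big_nil subr0; case: P P_unit PN_size PN_sum => [|p P] P_unit P_size.
    by rewrite big_nil => _; apply: is_intC0.
  rewrite mod0n => P_sum; apply: z_sum => //=.
  by move: P_size; rewrite /= addn0.
case/andP: N_unit => u_unit N_unit; rewrite big_cons.
have u_le_d : (u <= d)%N by case/and3P: u_unit.
have P'_unit : all (unit_index d) (P ++ [:: d - u]%N).
  by rewrite all_cat P_unit /= unit_index_sub.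
have := IH _ P'_unit N_unit.
rewrite big_cat big_seq1 size_cat sumn_cat /= addn0 => IH'.
have -> : \sum_(j <- P) z j - (z u + \sum_(j <- N) z j) =
    (\sum_(j <- P) z j + z (d - u)%N - \sum_(j <- N) z j) -
    (z u + z (d - u)%N) by ring.
apply: is_intCB (is_intC_add_compl u_unit); apply: IH'.
  by move: PN_size => /=; lia.
rewrite -modnDml PN_sum modnDml.
by rewrite (_ : sumn (u :: N) + (d - u) = sumn N + d)%N ?modnDr //=; lia.
Qed.

Lemma is_intC_add_sub_mulrn k a b :
  odd d || ~~ odd k -> unit_index d a -> unit_index d b ->
  (a + b = k %[mod d])%N -> is_intC (z a + z b - z 1%N *+ k).
Proof.
have one_unit := unit_index1 (ltnW d_gt1).
elim/ltn_ind: k a b => -[|[|k]] IH a b parity a_unit b_unit ab_k.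
- have -> : z a + z b - z 1%N *+ 0 =
      \sum_(j <- [:: a; b]) z j - \sum_(j <- [::]) z j.
    by rewrite !big_cons !big_nil; ring.
  by apply: is_intC_sum_sub_congr => //=; rewrite ?a_unit ?b_unit ?addn0.
- have -> : z a + z b - z 1%N *+ 1 =
      \sum_(j <- [:: a; b]) z j - \sum_(j <- [:: 1%N]) z j.
    by rewrite !big_cons !big_nil; ring.
  by apply: is_intC_sum_sub_congr => //=;
    rewrite ?a_unit ?b_unit ?one_unit ?addn0.
have parity' : odd d || ~~ odd k by rewrite /= negbK in parity.
have [a0 [b0 [a0_unit b0_unit ab0_k]]] := unit_index_sum_mod d_gt1 parity'.
have IHk := IH k (leqnSn _) a0 b0 parity' a0_unit b0_unit ab0_k.
have -> : z a + z b - z 1%N *+ k.+2 =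
    (\sum_(j <- [:: a; b]) z j - \sum_(j <- [:: a0; b0; 1; 1]%N) z j) +
    (z a0 + z b0 - z 1%N *+ k).
  by rewrite !big_cons big_nil !mulrS; ring.
apply: is_intCD IHk; apply: is_intC_sum_sub_congr.
- by rewrite /= a_unit b_unit.
- by rewrite /= a0_unit b0_unit one_unit.
- by [].
by rewrite /= !addn0 ab_k addnA -modnDml ab0_k modnDml addn2.
Qed.

Lemma is_intC_mulrn_d : is_intC (z 1%N *+ d).
Proof.
have one_unit := unit_index1 (ltnW d_gt1).
have := is_intC_add_sub_mulrn (orbN _) one_unit (unit_index_sub d_gt1 one_unit).
rewrite subnKC ?(ltnW d_gt1) // => /(_ erefl) add_sub_mulrn.
have -> : z 1%N *+ d =
    (z 1%N + z (d - 1)%N) - (z 1%N + z (d - 1)%N - z 1%N *+ d) by ring.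
exact: is_intCB (is_intC_add_compl one_unit) add_sub_mulrn.
Qed.

Lemma is_intC_sub_mulrn j : unit_index d j -> is_intC (z j - z 1%N *+ j).
Proof.
move=> j_unit; have one_unit := unit_index1 (ltnW d_gt1).
have parity : odd d || ~~ odd j.+1.
  rewrite /= negbK -implyNb; case/and3P: j_unit => _ _ j_d.
  apply/implyP => even_d; rewrite -coprimen2.
  by apply: coprime_dvdr j_d; rewrite dvdn2.
have := is_intC_add_sub_mulrn parity j_unit one_unit.
move=> /(_ (congr1 (modn^~ d) (addn1 j))).
by rewrite mulrS; congr is_intC; ring.
Qed.

End UnitIndexSums.

Theorem lemma3p8 (R : realType) (d : nat) (z : nat -> R[i]) :
  (0 < d)%N ->
  (forall (m : nat) (js : m.-tuple nat),
      (1 <= m <= 6)%N ->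
      all (unit_index d) js ->
      ((\sum_(j <- js) j) %% d)%N = 0%N ->
      is_intC (\sum_(j <- js) z j)) ->
  exists c : int, forall j : nat, unit_index d j ->
    is_intC (z j - (c * j%:Z)%:~R / d%:R).
Proof.
move=> d_gt0 z_tuple.
have z_sum (s : seq nat) : (1 <= size s <= 6)%N -> all (unit_index d) s ->
    (sumn s %% d = 0)%N -> is_intC (\sum_(j <- s) z j).
  by rewrite sumnE; apply: (z_tuple _ (in_tuple s)).
have [d_le1 | d_gt1] := leqP d 1.
  have d1 : d = 1%N by lia.
  subst d; exists 0 => j /and3P[j_gt0 j_le_d _]; have -> : j = 1%N by lia.
  by rewrite mul0r subr0; have := z_sum [:: 1%N]; rewrite big_seq1; apply.
have [c dz1] := is_intC_mulrn_d d_gt1 z_sum.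
exists c => j j_unit.
have -> : z j - (c * j%:Z)%:~R / d%:R = z j - z 1%N *+ j.
  have d_neq0 : d%:R != 0 :> R[i] by rewrite pnatr_eq0 -lt0n.
  by rewrite intrM -dz1 mulrAC -[z 1%N *+ d]mulr_natr mulfK // mulrzr pmulrn.
(* [exact:] does not unify the two instance paths to the ring of R[i]. *)
exact (is_intC_sub_mulrn d_gt1 z_sum j_unit).
Qed.
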